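(* Let $G$ be a connected graph with $|V(G)|\ge 3$ and $L(G)=2l(G)$. For any maximum matchings $F_L,F_l$ of $G$ with $\nu(G\setminus F_L)=L(G)$ and $\nu(G\setminus F_l)=l(G)$, every connected component of the subgraph with edge set $F_L\triangle F_l$ (and vertex set $V(F_L\triangle F_l)$) is a path of length $2$.
   Context: Graphs are finite, undirected, without loops or multiple edges. $\nu(G)$ denotes the maximum size of a matching of $G$; a matching is maximum if it has $\nu(G)$ edges. For $F\subseteq E(G)$, $G\setminus F$ is the graph with vertex set $V(G)$ and edge set $E(G)\setminus F$, and $V(F)$ is the set of vertices incident to some edge of $F$. $\triangle$ denotes symmetric difference. Define $L(G)=\max\{\nu(G\setminus F): F \text{ a maximum matching of } G\}$ and $l(G)=\min\{\nu(G\setminus F): F \text{ a maximum matching of } G\}$. *)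

(* A finite simple graph on vertex type T is given by its
   edge set E : {set {set T}}, every edge being a 2-element set of vertices. *)
From HB Require Import structures.
From mathcomp Require Import all_boot.
Set Implicit Arguments. Unset Strict Implicit. Unset Printing Implicit Defensive.

Section Graphs.
Variable T : finType.

Definition simple_graph (E : {set {set T}}) : Prop :=
  forall e, e \in E -> #|e| = 2.

Definition adj (E : {set {set T}}) : rel T := fun x y => [set x; y] \in E.

(* connected graph (vertex set = all of T) *)
Definition connected_graph (E : {set {set T}}) : Prop :=
  forall x y : T, connect (adj E) x y.

Definition is_matching (M : {set {set T}}) : bool :=
  [forall e in M, forall f in M, (e != f) ==> [disjoint e & f]].

Definition matching_of (E M : {set {set T}}) : bool :=
  (M \subset E) && is_matching M.

Definition nu (E : {set {set T}}) : nat :=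
  \max_(M : {set {set T}} | matching_of E M) #|M|.

Definition max_matching (E F : {set {set T}}) : bool :=
  matching_of E F && (#|F| == nu E).

Definition bigL (E : {set {set T}}) : nat :=
  \max_(F : {set {set T}} | max_matching E F) nu (E :\: F).

(* l(G) = min { nu(G \ F) : F maximum matching of G }
   (the default value #|E| is an upper bound of every nu(G \ F), and the set
   of maximum matchings is nonempty, so this is the true minimum) *)
Definition smalll (E : {set {set T}}) : nat :=
  \big[minn/#|E|]_(F : {set {set T}} | max_matching E F) nu (E :\: F).

Definition symdiff (A B : {set {set T}}) : {set {set T}} := (A :\: B) :|: (B :\: A).

Definition Vof (F : {set {set T}}) : {set T} := \bigcup_(e in F) e.

Definition components_are_P3 (D : {set {set T}}) : Prop :=
  forall x, x \in Vof D ->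
    exists a b c : T,
      [/\ a != b, b != c, a != c,
          [set y | connect (adj D) x y] = [set a; b; c] &
          [set e in D | e \subset [set y | connect (adj D) x y]]
            = [set [set a; b]; [set b; c]]].

End Graphs.

From HB Require Import structures.
From mathcomp Require Import all_boot zify.
Set Implicit Arguments. Unset Strict Implicit. Unset Printing Implicit Defensive.

(* Let A = FL \ Fl and B = Fl \ FL, so that the symmetric
   difference is A ∪ B and |A| = |B|.  Take a maximum matching M of G \ FL,
   of size L = 2l.  Both A and M \ Fl are matchings of G \ Fl, hence have at
   most l edges, while M ∩ Fl ⊆ B; since |M| = |M ∩ Fl| + |M \ Fl| = 2l all
   these bounds are tight: |B| = l, |M \ Fl| = l and B ⊆ M.  Consequently no
   edge e of A has both ends covered by B (otherwise (M \ Fl) + e would be a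
   matching of G \ Fl with l + 1 edges), so e meets at most one edge of B; by
   maximality of Fl it meets at least one.  Symmetrically every edge of B meets
   some edge of A, and a counting argument (|A| = |B|) upgrades this to
   exactly one. *)

Section Matchings.
Variable T : finType.
Implicit Types (e f g : {set T}) (E M X Y : {set {set T}}).

Definition meets e f : bool := ~~ [disjoint e & f].

Lemma meetsP e f : reflect (exists2 x, x \in e & x \in f) (meets e f).
Proof.
rewrite /meets -setI_eq0; apply: (iffP (set0Pn _)) => [[x /setIP[]]|[x xe xf]].
  by exists x.
by exists x; apply/setIP.
Qed.

Lemma meets_sym e f : meets e f = meets f e.
Proof. by rewrite /meets disjoint_sym. Qed.

Lemma meetsUr g e f : meets g (e :|: f) -> meets g e \/ meets g f.
Proof.
case/meetsP=> x xg; rewrite inE => /orP[xe|xf].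
  by left; apply/meetsP; exists x.
by right; apply/meetsP; exists x.
Qed.

Lemma matchingP M :
  reflect (forall e f, e \in M -> f \in M -> meets e f -> e = f) (is_matching M).
Proof.
apply: (iffP forall_inP) => [Mm e f eM fM mef | H e eM].
  move/forall_inP: (Mm e eM) => /(_ f fM) /implyP.
  by case: eqP => // _ /(_ isT) dis; move: mef; rewrite /meets dis.
apply/forall_inP => f fM; apply/implyP; apply: contraNT => mef.
by rewrite (H e f).
Qed.

Lemma matching_subset X Y : Y \subset X -> is_matching X -> is_matching Y.
Proof.
move=> /subsetP YX /matchingP Xm; apply/matchingP => e f eY fY.
exact: Xm (YX e eY) (YX f fY).
Qed.

Lemma matching_setU1 X e :
  is_matching X -> (forall g, g \in X -> ~~ meets e g) -> is_matching (e |: X).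
Proof.
move=> /matchingP Xm free; apply/matchingP => g h; rewrite !inE.
case/orP=> [/eqP->|gX]; case/orP=> [/eqP->|hX] //.
- by move=> meh; move/negP: (free h hX).
- by rewrite meets_sym => mge; move/negP: (free g gX).
- exact: Xm.
Qed.

Lemma nu_ge E M : matching_of E M -> #|M| <= nu E.
Proof. exact: (@leq_bigmax_cond _ (matching_of E) (fun M : {set {set T}} => #|M|)). Qed.

Lemma nu_witness E : exists2 M, matching_of E M & #|M| = nu E.
Proof.
have M0 : matching_of E set0.
  by rewrite /matching_of sub0set; apply/matchingP => e f; rewrite inE.
have [|M HM HE] := @eq_bigmax_cond _ (matching_of E) (fun M : {set {set T}} => #|M|).
  by apply/card_gt0P; exists set0.
by exists M; rewrite // /nu HE.
Qed.

(* An edge of a matching Y that is not in a maximum matching X of the same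
   graph meets some edge of X \ Y: otherwise it could be added to X. *)
Lemma max_matching_meets E X Y e :
  max_matching E X -> matching_of E Y -> e \in Y :\: X ->
  exists2 f, f \in X :\: Y & meets e f.
Proof.
case/andP=> /andP[XE Xm] /eqP cX /andP[YE /matchingP Ym] /setDP[eY eX].
have [f /andP[fXY mef]|none] := pickP [pred f | (f \in X :\: Y) && meets e f].
  by exists f.
suff : #|e |: X| <= nu E by rewrite cardsU1 eX cX ltnn.
apply: nu_ge; rewrite /matching_of subUset sub1set (subsetP YE) // XE /=.
apply: matching_setU1 => // g gX; apply/negP => meg.
have gY : g \in Y.
  by apply: contraFT (none g) => gY; rewrite /= inE gY gX meg.
by move: eX; rewrite (Ym e g) ?gX.
Qed.

Lemma card_setD_sym X Y : #|X| = #|Y| -> #|X :\: Y| = #|Y :\: X|.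
Proof.
move=> cXY; have := cardsID Y X; have := cardsID X Y.
by rewrite setIC cXY => <- /eqP; rewrite eqn_add2l => /eqP.
Qed.

Lemma edge_other_end e b : #|e| = 2 -> b \in e -> exists2 a, a != b & e = [set a; b].
Proof.
move/eqP/cards2P => [x [y [xy ->]]]; rewrite !inE => /orP[]/eqP->.
  by exists y; rewrite 1?eq_sym // setUC.
by exists x.
Qed.

Lemma edge_of_ends e x y : #|e| = 2 -> x \in e -> y \in e -> x != y -> e = [set x; y].
Proof.
move=> ce xe ye xy; apply/esym/eqP.
by rewrite eqEcard subUset !sub1set xe ye cards2 xy ce.
Qed.

End Matchings.

(* Double counting for a relation r between equinumerous finite sets A and B:
   if every a ∈ A is related to exactly one b ∈ B and every b ∈ B to at least
   one a ∈ A, then every b ∈ B is related to exactly one a ∈ A.  (The partner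
   map A → B is onto, hence injective.) *)
Lemma partner_unique (T : finType) (A B : {set T}) (r : rel T) :
  #|A| = #|B| ->
  (forall a, a \in A -> exists2 b, b \in B & r a b) ->
  (forall a b1 b2, a \in A -> b1 \in B -> b2 \in B -> r a b1 -> r a b2 -> b1 = b2) ->
  (forall b, b \in B -> exists2 a, a \in A & r a b) ->
  forall a1 a2 b, a1 \in A -> a2 \in A -> b \in B -> r a1 b -> r a2 b -> a1 = a2.
Proof.
move=> cAB exB uniqB exA.
pose phi a := odflt a [pick b in B | r a b].
have phiP a : a \in A -> phi a \in B /\ r a (phi a).
  move=> aA; rewrite /phi; case: pickP => [b /andP[]|none] //=.
  by have [b bB rab] := exB a aA; move: (none b); rewrite bB rab.
have phi_eq a b : a \in A -> b \in B -> r a b -> phi a = b.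
  by move=> aA bB rab; have [pB pr] := phiP a aA; apply: uniqB pr rab.
have imA : phi @: A = B.
  apply/eqP; rewrite eqEsubset; apply/andP; split; apply/subsetP.
    by move=> _ /imsetP[a aA ->]; case: (phiP a aA).
  move=> b bB; have [a aA rab] := exA b bB.
  by apply/imsetP; exists a => //; apply/esym/phi_eq.
have phi_inj : {in A &, injective phi} by apply/imset_injP; rewrite imA cAB.
move=> a1 a2 b a1A a2A bB r1 r2; apply: phi_inj => //.
by rewrite (phi_eq a1 b) ?(phi_eq a2 b).
Qed.

Lemma squeeze_sum (x y z l : nat) :
  x + y = 2 * l -> x <= z -> z <= l -> y <= l -> z <= x /\ y = l.
Proof. by move=> *; lia. Qed.

Lemma isolated_pair_is_P3 (T : finType) (D : {set {set T}}) (e f : {set T}) x :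
  simple_graph D -> e \in D -> f \in D -> e != f -> meets e f ->
  (forall g, g \in D -> meets g (e :|: f) -> g = e \/ g = f) ->
  x \in e :|: f ->
  exists a b c : T,
    [/\ a != b, b != c, a != c,
        [set y | connect (adj D) x y] = [set a; b; c] &
        [set g in D | g \subset [set y | connect (adj D) x y]]
          = [set [set a; b]; [set b; c]]].
Proof.
move=> Dsimple eD fD ef /meetsP[b be bf] isolated xS.
have [a ab He] := edge_other_end (Dsimple e eD) be.
have [c cb Hf] := edge_other_end (Dsimple f fD) bf.
have ac : a != c by apply: contraNneq ef => ac; rewrite He Hf ac.
have adj_sym : connect_sym (adj D).
  by apply: sym_connect_sym => y z; rewrite /adj /= setUC.
have closedS : closed (adj D) (e :|: f).
  apply: intro_closed => // y z ayz yS.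
  have : meets [set y; z] (e :|: f) by apply/meetsP; exists y; rewrite ?set21.
  by case/(isolated _ ayz) => h; rewrite inE -h set22 ?orbT.
have ab_adj : adj D a b by rewrite /adj -He.
have cb_adj : adj D c b by rewrite /adj -Hf.
have to_b y : y \in e :|: f -> connect (adj D) y b.
  by rewrite He Hf !inE => /orP[/orP[]|/orP[]] /eqP->; [apply: connect1 | | apply: connect1 | ].
have comp : [set y | connect (adj D) x y] = e :|: f.
  apply/setP => y; rewrite inE; apply/idP/idP => [/(closed_connect closedS) <- //|yS].
  by apply: connect_trans (to_b x xS) _; rewrite adj_sym; apply: to_b.
exists a, b, c; split => //; first by rewrite eq_sym.
  by apply/setP => y; rewrite comp He Hf !inE; case: (y == a); case: (y == b); case: (y == c).
apply/setP => g; rewrite inE in_set2 comp -He [[set b; c]]setUC -Hf.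
apply/andP/orP => [[gD gS]|[/eqP->|/eqP->]]; last 2 first.
- by split; rewrite ?subsetUl.
- by split; rewrite ?subsetUr.
have [z zg] : exists z, z \in g by apply/set0Pn; rewrite -card_gt0 (Dsimple g gD).
have : meets g (e :|: f) by apply/meetsP; exists z; rewrite ?(subsetP gS).
by case/(isolated g gD) => ->; [left | right].
Qed.

Section SymmetricDifference.
Variables (T : finType) (E FL Fl M : {set {set T}}) (l : nat).
Hypothesis Esimple : simple_graph E.
Hypothesis FLmax : max_matching E FL.
Hypothesis Flmax : max_matching E Fl.
Hypothesis nu_Fl : nu (E :\: Fl) = l.
Hypothesis M_sub : M \subset E :\: FL.
Hypothesis M_matching : is_matching M.
Hypothesis card_M : #|M| = 2 * l.

Local Notation A := (FL :\: Fl).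
Local Notation B := (Fl :\: FL).

Let FL_of : matching_of E FL. Proof. by case/andP: FLmax. Qed.
Let Fl_of : matching_of E Fl. Proof. by case/andP: Flmax. Qed.
Let FLE : FL \subset E. Proof. by case/andP: FL_of. Qed.
Let FlE : Fl \subset E. Proof. by case/andP: Fl_of. Qed.
Let FL_matching : is_matching FL. Proof. by case/andP: FL_of. Qed.
Let Fl_matching : is_matching Fl. Proof. by case/andP: Fl_of. Qed.

Let M_notin_FL g : g \in M -> g \notin FL.
Proof. by move=> gM; have := subsetP M_sub g gM; rewrite inE => /andP[]. Qed.

Let small_matching (N : {set {set T}}) : N \subset E :\: Fl -> is_matching N -> #|N| <= l.
Proof. by move=> NE Nm; rewrite -nu_Fl nu_ge ?/matching_of ?NE. Qed.

Let M_minus_Fl_sub : M :\: Fl \subset E :\: Fl.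
Proof.
apply/subsetP => g /setDP[gM gFl]; have := subsetP M_sub g gM.
by rewrite !inE gFl => /andP[].
Qed.

Let card_A_B : #|A| = #|B|.
Proof.
by apply: card_setD_sym; case/andP: FLmax => _ /eqP->; case/andP: Flmax => _ /eqP->.
Qed.

Lemma tight_bounds : #|M :\: Fl| = l /\ B \subset M.
Proof.
have cardMFl : #|M :\: Fl| <= l.
  by apply: small_matching M_minus_Fl_sub (matching_subset (subsetDl M Fl) _).
have cardB : #|B| <= l.
  rewrite -card_A_B; apply: small_matching (matching_subset (subsetDl FL Fl) _) => //.
  by apply/subsetP => g /setDP[gFL gFl]; rewrite inE gFl (subsetP FLE).
have MIB : M :&: Fl \subset B.
  by apply/subsetP => g /setIP[gM gFl]; rewrite inE gFl M_notin_FL.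
have sumM : #|M :&: Fl| + #|M :\: Fl| = 2 * l by rewrite cardsID card_M.
have [leBM ->] := squeeze_sum sumM (subset_leq_card MIB) cardB cardMFl.
have /eqP <- : M :&: Fl == B by rewrite eqEcard MIB leBM.
by split; last exact: subsetIl.
Qed.

(* No edge of A has both ends covered by B: otherwise (M \ Fl) + e would be a
   matching of E \ Fl with l + 1 edges. *)
Lemma A_edge_uncovered e : e \in A -> ~~ (e \subset Vof B).
Proof.
case/setDP=> eFL eFl; apply/negP => eB; have [cardMFl BM] := tight_bounds.
have : #|e |: (M :\: Fl)| <= l.
  apply: small_matching.
    by rewrite subUset sub1set inE eFl (subsetP FLE) ?M_minus_Fl_sub.
  apply: matching_setU1 (matching_subset (subsetDl M Fl) _) _ => // g /setDP[gM gFl].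
  apply/negP => /meetsP[x xe xg]; have /bigcupP[h hB xh] := subsetP eB x xe.
  have hg : h = g.
    by apply: (matchingP _ M_matching) (subsetP BM h hB) gM _; apply/meetsP; exists x.
  by move: hB gFl; rewrite hg inE => /andP[_ ->].
have eM : e \notin M := contraL (@M_notin_FL e) eFL.
by rewrite cardsU1 inE (negbTE eM) andbF cardMFl add1n ltnn.
Qed.

Lemma A_meets_B e : e \in A -> exists2 f, f \in B & meets e f.
Proof. exact: max_matching_meets Flmax FL_of. Qed.

Lemma A_meets_unique e f1 f2 :
  e \in A -> f1 \in B -> f2 \in B -> meets e f1 -> meets e f2 -> f1 = f2.
Proof.
move=> eA f1B f2B /meetsP[z1 z1e z1f] /meetsP[z2 z2e z2f].
have f1Fl : f1 \in Fl by case/setDP: f1B.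
have f2Fl : f2 \in Fl by case/setDP: f2B.
have [ez|nz] := eqVneq z1 z2.
  by apply: (matchingP _ Fl_matching) f1Fl f2Fl _; apply/meetsP; exists z1; rewrite // ez.
have eE : e \in E by case/setDP: eA => eFL _; apply: (subsetP FLE).
move/negP: (A_edge_uncovered eA); case.
rewrite (edge_of_ends (Esimple eE) z1e z2e nz) subUset !sub1set.
by apply/andP; split; apply/bigcupP; [exists f1 | exists f2].
Qed.

Lemma B_meets_A f : f \in B -> exists2 e, e \in A & meets e f.
Proof.
move=> fB; have [e eA mfe] := max_matching_meets FLmax Fl_of fB.
by exists e; rewrite // meets_sym.
Qed.

Lemma B_meets_unique e1 e2 f :
  e1 \in A -> e2 \in A -> f \in B -> meets e1 f -> meets e2 f -> e1 = e2.
Proof.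
exact: (partner_unique card_A_B A_meets_B A_meets_unique B_meets_A).
Qed.

Lemma meeting_pair_isolated e f g :
  e \in A -> f \in B -> meets e f ->
  g \in symdiff FL Fl -> meets g (e :|: f) -> g = e \/ g = f.
Proof.
move=> eA fB mef; rewrite inE => /orP[gA|gB] /meetsUr[mge|mgf].
- left; apply: (matchingP _ FL_matching) mge; by [case/setDP: gA | case/setDP: eA].
- by left; apply: B_meets_unique mef.
- by right; apply: (A_meets_unique eA); rewrite // meets_sym.
- right; apply: (matchingP _ Fl_matching) mgf; by [case/setDP: gB | case/setDP: fB].
Qed.

Lemma symdiff_components_P3 : components_are_P3 (symdiff FL Fl).
Proof.
have Dsimple : simple_graph (symdiff FL Fl).
  by move=> g; rewrite !inE => /orP[]/andP[_ g_in]; apply: Esimple;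
    [apply: (subsetP FLE) | apply: (subsetP FlE)].
move=> x /bigcupP[g gD xg].
have [e [f [eA fB mef xef]]] :
    exists e f, [/\ e \in A, f \in B, meets e f & x \in e :|: f].
  move: gD; rewrite inE => /orP[gA|gB].
    by have [f fB mgf] := A_meets_B gA; exists g, f; split; rewrite // inE xg.
  by have [e eA meg] := B_meets_A gB; exists e, g; split; rewrite // inE xg orbT.
have eD : e \in symdiff FL Fl by rewrite inE eA.
have fD : f \in symdiff FL Fl by rewrite inE fB orbT.
have ef : e != f.
  by apply: contraTneq fB => <-; case/setDP: eA => eFL _; rewrite inE eFL.
apply: (isolated_pair_is_P3 Dsimple eD fD ef mef _ xef) => h hD.
exact: meeting_pair_isolated.
Qed.

End SymmetricDifference.

Theorem claim2 (T : finType) (E : {set {set T}})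
  (hsimple : simple_graph E) (hconn : connected_graph E)
  (hV : 3 <= #|T|) (hL : bigL E = 2 * smalll E)
  (FL Fl : {set {set T}})
  (hFL : max_matching E FL) (hFLv : nu (E :\: FL) = bigL E)
  (hFl : max_matching E Fl) (hFlv : nu (E :\: Fl) = smalll E) :
  components_are_P3 (symdiff FL Fl).
Proof.
have [M /andP[M_sub M_matching] card_M] := nu_witness (E :\: FL).
rewrite hFLv hL in card_M.
exact: symdiff_components_P3 hsimple hFL hFl hFlv M_sub M_matching card_M.
Qed.
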